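(* Let $G$ be a countable connected graph containing no alternating ray, and let $T$ be a normal spanning tree of $G$ with root $r$. Then $\mathrm{rank}_T(v)$ is defined for every vertex $v\in V(G)$.
   Context: A ray is a one-way infinite path; it is alternating if it passes through infinitely many vertices of finite degree and infinitely many of infinite degree (degrees taken in $G$). A spanning tree $T$ with root $r$ induces the tree order $\le$ ($u\le v$ iff $u$ lies on the path in $T$ from $r$ to $v$); $T$ is normal if the endpoints of every edge of $G$ are $\le$-comparable. $\lfloor v\rfloor=\{u:u\ge v\}$. The $T$-rank is defined by transfinite recursion: $\mathrm{rank}_T(v)=0$ if $\lfloor v\rfloor$ consists only of vertices of finite degree or only of vertices of infinite degree. For an ordinal $\alpha>0$, a vertex $v$ of infinite (resp. finite) degree has $\mathrm{rank}_T(v)=\alpha$ if no rank smaller than $\alpha$ has been assigned to $v$ and every vertex of finite (resp. infinite) degree in $\lfloor v\rfloor\setminus\{v\}$ has been assigned a rank smaller than $\alpha$. *)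

From mathcomp Require Import all_boot.
Set Implicit Arguments. Unset Strict Implicit. Unset Printing Implicit Defensive.

Section Graphs.
Variable V : countType.

Definition simple_graph (adj : rel V) : Prop :=
  symmetric adj /\ irreflexive adj.

Definition spath (e : rel V) (x y : V) (p : seq V) : Prop :=
  path e x p /\ uniq (x :: p) /\ last x p = y.

Definition connected_graph (adj : rel V) : Prop :=
  forall x y : V, exists p, spath adj x y p.

Definition fin_deg (adj : rel V) (v : V) : Prop :=
  exists s : seq V, forall u, adj v u -> u \in s.

Definition is_ray (adj : rel V) (f : nat -> V) : Prop :=
  injective f /\ forall n, adj (f n) (f n.+1).

Definition alternating_ray (adj : rel V) (f : nat -> V) : Prop :=
  is_ray adj f /\
  (forall N, exists n, N <= n /\ fin_deg adj (f n)) /\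
  (forall N, exists n, N <= n /\ ~ fin_deg adj (f n)).

Definition has_cycle (t : rel V) : Prop :=
  exists x p, path t x p /\ uniq (x :: p) /\ 2 <= size p /\ t (last x p) x.

Definition spanning_tree (adj : rel V) (t : rel V) : Prop :=
  simple_graph t /\ subrel t adj /\ connected_graph t /\ ~ has_cycle t.

Definition tle (t : rel V) (r u v : V) : Prop :=
  exists p, spath t r v p /\ u \in r :: p.

Definition normal_tree (adj t : rel V) (r : V) : Prop :=
  spanning_tree adj t /\
  forall x y, adj x y -> tle t r x y \/ tle t r y x.

(* "rank_T(v) is defined": the set of vertices receiving a T-rank under the
   transfinite recursion of the paper is the least set closed under the
   three clauses below (rank 0; rank alpha > 0 for infinite-degree vertices;
   rank alpha > 0 for finite-degree vertices). *)
Inductive rank_defined (adj t : rel V) (r : V) : V -> Prop :=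
| rank_zero v :
    ((forall u, tle t r v u -> fin_deg adj u) \/
     (forall u, tle t r v u -> ~ fin_deg adj u)) ->
    rank_defined adj t r v
| rank_inf v :
    ~ fin_deg adj v ->
    (forall u, tle t r v u -> u <> v -> fin_deg adj u -> rank_defined adj t r u) ->
    rank_defined adj t r v
| rank_fin v :
    fin_deg adj v ->
    (forall u, tle t r v u -> u <> v -> ~ fin_deg adj u -> rank_defined adj t r u) ->
    rank_defined adj t r v.

End Graphs.

From mathcomp Require Import all_boot.
From Stdlib Require Import Classical ClassicalEpsilon ChoiceFacts.
Set Implicit Arguments. Unset Strict Implicit.

(* If some vertex had no rank, the rank clauses would give an unranked vertex
   strictly above it in the tree order whose degree is of the opposite kind
   (finite/infinite), and iterating this by dependent choice yields an
   increasing chain of unranked vertices alternating between finite and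
   infinite degree.  Since tree paths from the root are unique, the root paths
   to the chain's vertices extend each other, and their union is a ray of the
   tree, hence of G, passing through the chain: an alternating ray. *)

Section Cycles.
Variables (V : countType) (t : rel V).
Hypothesis tsym : symmetric t.

Lemma rev_path_sym x p z :
  path t x (rcons p z) -> path t z (rcons (rev p) x).
Proof.
move=> Pxz; rewrite -rev_cons -(belast_rcons x p z) -{1}(last_rcons x p z).
by rewrite -(@eq_path _ (fun u v => t v u)) ?rev_path // => u v; rewrite tsym.
Qed.

Lemma has_cycle_of_meeting_paths x z p q :
  path t x (rcons p z) -> path t x (rcons q z) ->
  uniq (x :: rcons p z) -> uniq (x :: q) -> ~~ has (mem (rcons p z)) q ->
  0 < size p + size q -> has_cycle t.
Proof.
move=> Pp Pq Up Uq disj npq.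
have: path t x (rcons (rcons p z ++ rev q) x).
  by rewrite rcons_cat cat_path Pp last_rcons rev_path_sym.
rewrite rcons_path => /andP[Pc Lc].
exists x, (rcons p z ++ rev q); split=> //; split; last split=> //.
  move: Up Uq => /= /andP[xp Up] /andP[xq Uq].
  rewrite mem_cat mem_rev negb_or xp xq cat_uniq rev_uniq Up Uq /= andbT.
  by apply: contra disj => /hasP[w]; rewrite mem_rev => wq wp; apply/hasP; exists w.
by rewrite size_cat size_rcons size_rev addSn ltnS.
Qed.

Lemma has_cycle_of_diverging_paths x y a b p q :
  a != b -> path t x (a :: p) -> path t x (b :: q) ->
  uniq (x :: a :: p) -> uniq (x :: b :: q) -> last a p = y -> last b q = y ->
  has_cycle t.
Proof.
move=> ab; set s1 := a :: p; set s2 := b :: q => P1 P2 U1 U2 L1 L2.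
have meet : has (mem s2) s1.
  by apply/hasP; exists y; [rewrite -L1 mem_last | rewrite /= -L2 mem_last].
set i := find (mem s2) s1; set z := nth x s1 i; set j := index z s2.
have z_s2 : z \in s2 by exact: nth_find.
have take_i : take i.+1 s1 = rcons (take i s1) z.
  by rewrite (take_nth x) // -has_find.
have take_j : take j.+1 s2 = rcons (take j s2) z.
  by rewrite (take_nth x) ?nth_index ?index_mem.
apply: (@has_cycle_of_meeting_paths x z (take i s1) (take j s2)).
- by rewrite -take_i take_path.
- by rewrite -take_j take_path.
- by rewrite -take_i -[x :: _]/(take i.+2 (x :: s1)) take_uniq.
- by rewrite -[x :: _]/(take j.+1 (x :: s2)) take_uniq.
- apply/hasP => -[w w_j]; rewrite /= mem_rcons inE => /orP[/eqP wz|w_i].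
    by move: w_j; rewrite wz -has_pred1 has_take ?has_pred1 // ltnn.
  have: ~~ has (mem s2) (take i s1) by rewrite has_take ?ltnn.
  by move/hasP; apply; exists w => //; exact: mem_take w_j.
- have i_lt : i < size s1 by rewrite -has_find.
  have j_lt : j < size s2 by rewrite index_mem.
  rewrite (size_takel (ltnW i_lt)) (size_takel (ltnW j_lt)) addn_gt0 !lt0n.
  apply: contraNT ab.
  rewrite negb_or !negbK => /andP[/eqP i0 /eqP j0].
  have za : z = a by rewrite /z i0.
  have zb : z = b by rewrite -[RHS]/(nth x s2 0) -j0 nth_index.
  by rewrite -za -zb.
Qed.

End Cycles.

Lemma spath_cons_neq (V : countType) (t : rel V) x y a p :
  spath t x y (a :: p) -> x != y.
Proof.
by move=> [_ [/= /andP[x_notin _] <-]]; apply: contraNneq x_notin => ->; exact: mem_last.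
Qed.

Lemma spath_unique (V : countType) (t : rel V) :
  symmetric t -> ~ has_cycle t ->
  forall x y p q, spath t x y p -> spath t x y q -> p = q.
Proof.
move=> tsym t_acyclic x y p; elim: p x => [|a p IHp] x [|b q] Sp Sq //.
- by have [_ [_ xy]] := Sp; move: (spath_cons_neq Sq); rewrite -xy eqxx.
- by have [_ [_ xy]] := Sq; move: (spath_cons_neq Sp); rewrite -xy eqxx.
have [[Pp [Up Lp]] [Pq [Uq Lq]]] := (Sp, Sq).
have [ab|ab] := eqVneq a b.
  subst b; congr (_ :: _); apply: (IHp a).
    by split; [case/andP: Pp | split; [case/andP: Up|]].
  by split; [case/andP: Pq | split; [case/andP: Uq|]].
by case: t_acyclic; exact: (has_cycle_of_diverging_paths tsym ab Pp Pq Up Uq Lp Lq).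
Qed.

Lemma nth_prefix (T : eqType) (x0 : T) s1 s2 i :
  prefix s1 s2 -> i < size s1 -> nth x0 s1 i = nth x0 s2 i.
Proof. by move=> /prefixP[s ->] i_lt; rewrite nth_cat i_lt. Qed.

Section RootPaths.
Variables (V : countType) (t : rel V) (r : V).
Hypotheses (tsym : symmetric t) (t_acyclic : ~ has_cycle t).
Variable P : V -> seq V.
Hypothesis P_spath : forall v, spath t r v (P v).

Lemma root_path_tle u v : tle t r u v -> u \in r :: P v.
Proof. by move=> [p [Sp up]]; rewrite (spath_unique tsym t_acyclic (P_spath v) Sp). Qed.

Lemma nth_root_path v : nth r (r :: P v) (size (P v)) = v.
Proof. by rewrite -last_nth; case: (P_spath v) => [_ []]. Qed.

Lemma prefix_root_path u v : u \in r :: P v -> prefix (r :: P u) (r :: P v).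
Proof.
move=> uv; set k := index u (r :: P v).
have [Pv [Uv _]] := P_spath v.
have take_k : take k.+1 (r :: P v) = rcons (take k (r :: P v)) u.
  by rewrite (take_nth r) ?index_mem ?nth_index.
have Su : spath t r u (take k (P v)).
  split; first exact: take_path.
  split; first by rewrite -[r :: _]/(take k.+1 (r :: P v)) take_uniq.
  by rewrite -(last_cons r r) -[r :: _]/(take k.+1 (r :: P v)) take_k last_rcons.
rewrite (spath_unique tsym t_acyclic (P_spath u) Su).
exact: (prefix_take (r :: P v) k.+1).
Qed.

Section IncreasingChain.
Variable c : nat -> V.
Hypotheses (c_below : forall n, c n \in r :: P (c n.+1)) (c_neq : forall n, c n <> c n.+1).

Local Notation height n := (size (P (c n))).

Lemma chain_prefix :
  {homo (fun n => r :: P (c n)) : n m / n <= m >-> prefix n m}.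
Proof.
apply: homo_leq; [exact: prefix_refl | exact: prefix_trans |].
by move=> n; apply: prefix_root_path.
Qed.

Lemma chain_height_lt n : height n < height n.+1.
Proof.
have /prefixP[[|x s] Es] := chain_prefix (leqnSn n).
  suff /c_neq [] : c n = c n.+1.
  have [_ [_ <-]] := P_spath (c n); have [_ [_ <-]] := P_spath (c n.+1).
  by move: Es; rewrite cats0 => -[->].
rewrite -[P (c n.+1)]/(behead (r :: P (c n.+1))) Es /=.
by rewrite size_cat /= addnS ltnS leq_addr.
Qed.

Lemma leq_chain_height n : n <= height n.
Proof. by elim: n => // n IHn; exact: leq_ltn_trans IHn (chain_height_lt n). Qed.

Definition chain_ray k := nth r (r :: P (c k)) k.

Lemma chain_ray_nth k n : k <= height n -> chain_ray k = nth r (r :: P (c n)) k.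
Proof.
move=> kn; rewrite /chain_ray.
rewrite (nth_prefix r (chain_prefix (leq_maxl k n))) ?ltnS ?leq_chain_height //.
by rewrite -(nth_prefix r (chain_prefix (leq_maxr k n))).
Qed.

Lemma chain_ray_height n : chain_ray (height n) = c n.
Proof. by rewrite (chain_ray_nth (leqnn _)) nth_root_path. Qed.

Lemma chain_ray_is_ray : is_ray t chain_ray.
Proof.
split.
  move=> i j Eij; pose n := maxn i j.
  have i_le : i <= height n := leq_trans (leq_maxl i j) (leq_chain_height n).
  have j_le : j <= height n := leq_trans (leq_maxr i j) (leq_chain_height n).
  move: Eij; rewrite (chain_ray_nth i_le) (chain_ray_nth j_le).
  have [_ [Un _]] := P_spath (c n).
  by move/eqP; rewrite nth_uniq ?ltnS // => /eqP.
move=> k; have k_le : k.+1 <= height k.+1 := leq_chain_height k.+1.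
rewrite (chain_ray_nth (ltnW k_le)) (chain_ray_nth k_le).
by have [/(pathP r) Pk _] := P_spath (c k.+1); apply: Pk.
Qed.

End IncreasingChain.
End RootPaths.

Lemma alternating_ray_of_ray (V : countType) (adj : rel V) (f : nat -> V) (h : nat -> nat) :
  is_ray adj f -> (forall n, n <= h n) ->
  (forall n, fin_deg adj (f (h n.+1)) <-> ~ fin_deg adj (f (h n))) ->
  alternating_ray adj f.
Proof.
move=> f_ray h_ge h_alt; split=> //.
have h_geS N : N <= h N.+1 := leq_trans (leqnSn N) (h_ge N.+1).
split=> N; have [fN|fN] := classic (fin_deg adj (f (h N))).
- by exists (h N).
- by exists (h N.+1); split=> //; apply/h_alt.
- by exists (h N.+1); split=> //; move/h_alt; apply.
- by exists (h N).
Qed.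

Section Ranks.
Variables (V : countType) (adj t : rel V) (r : V).

Lemma unranked_above w : ~ rank_defined adj t r w ->
  exists u, [/\ tle t r w u, u <> w, fin_deg adj u <-> ~ fin_deg adj w
              & ~ rank_defined adj t r u].
Proof.
move=> w_unranked; apply: NNPP => no_u; apply: w_unranked.
have [fw|fw] := classic (fin_deg adj w).
  apply: rank_fin => // u wu uw fu; apply: NNPP => u_unranked.
  by apply: no_u; exists u; split=> //; split=> // _.
apply: rank_inf => // u wu uw fu; apply: NNPP => u_unranked.
by apply: no_u; exists u.
Qed.

Lemma unranked_chain v : ~ rank_defined adj t r v ->
  exists c : nat -> V, forall n,
    [/\ tle t r (c n) (c n.+1), c n.+1 <> c n,
        fin_deg adj (c n.+1) <-> ~ fin_deg adj (c n)
      & ~ rank_defined adj t r (c n)].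
Proof.
move=> v_unranked.
pose R w u := ~ rank_defined adj t r w ->
  [/\ tle t r w u, u <> w, fin_deg adj u <-> ~ fin_deg adj w
    & ~ rank_defined adj t r u].
have R_total w : exists u, R w u.
  have [w_ranked|/unranked_above[u Ru]] := classic (rank_defined adj t r w).
    by exists w.
  by exists u.
have [c [c0 cR]] :=
  functional_choice_imp_functional_dependent_choice choice R R_total v.
have c_unranked n : ~ rank_defined adj t r (c n).
  by elim: n => [|n IHn]; [rewrite c0 | case: (cR n IHn)].
by exists c => n; have [? ? ? ?] := cR n (c_unranked n); split.
Qed.

End Ranks.

Theorem lemma3p2 (V : countType) (adj : rel V) (t : rel V) (r : V) :
  simple_graph adj ->
  connected_graph adj ->
  (forall f : nat -> V, ~ alternating_ray adj f) ->
  normal_tree adj t r ->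
  forall v : V, rank_defined adj t r v.
Proof.
move=> _ _ no_alt_ray [[[tsym _] [t_adj [t_conn t_acyclic]]] _] v.
apply: NNPP => /unranked_chain[c c_spec].
have [P P_spath] := choice (spath t r) (t_conn r).
have c_below n : c n \in r :: P (c n.+1).
  by case: (c_spec n) => /(root_path_tle tsym t_acyclic P_spath).
have c_neq n : c n <> c n.+1 by case: (c_spec n) => _ /nesym.
have [ray_inj ray_t] := chain_ray_is_ray tsym t_acyclic P_spath c_below c_neq.
apply: (no_alt_ray (chain_ray r P c)).
apply: (alternating_ray_of_ray (h := fun n => size (P (c n)))).
- by split=> // n; apply/t_adj/ray_t.
- by move=> n; apply: leq_chain_height c_below c_neq n.
- move=> n; rewrite !(chain_ray_height tsym t_acyclic P_spath c_below c_neq).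
  by case: (c_spec n).
Qed.
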